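(* Let $0<\eta<\frac1{2L}$ and let $\{(X^k,X_0^k;Y^k,Z^k)\}_{k\ge0}$ be generated by ADAPD (defined in the context). Then for all $k\ge0$, $$\mathcal L_\eta(X^{k+1},X_0^k;Y^k,Z^k)-\mathcal L_\eta(X^k,X_0^k;Y^k,Z^k)\le\frac{2L\eta-1}{2\eta}\|X^{k+1}-X^k\|_F^2+\frac{\epsilon_{k+1}}{2L}.$$
   Context: Notation: $\langle A,B\rangle=\sum_{i,j}a_{ij}b_{ij}$, $\|\cdot\|_F$ Frobenius norm, $e\in\mathbb R^N$ all-ones vector. Mixing matrix $W\in\mathbb R^{N\times N}$ of an undirected graph $\mathcal G=(\{1,\dots,N\},\mathcal E)$ with (i) $w_{ij}>0$ if $(i,j)\in\mathcal E$, $w_{ij}=0$ otherwise; (ii) $W=W^\top$; (iii) $\mathrm{null}(I-W)=\mathrm{span}\{e\}$; (iv) $-1<\lambda_N(W)\le\dots\le\lambda_2(W)<\lambda_1(W)=1$. $\sqrt{I-W}$ is the PSD square root of $I-W$. $f_i:\mathbb R^p\to\mathbb R$ differentiable; $F(X)=\frac1N\sum_if_i(x_i)$ for $X$ with rows $x_i^\top$, gradient $\nabla F(X)$ with rows $\frac1N\nabla f_i(x_i)^\top$; $\|\nabla F(X)-\nabla F(X')\|_F\le L\|X-X'\|_F$ for all $X,X'$, $0<L<\infty$. Augmented Lagrangian: $\mathcal L_\eta(X,X_0;Y,Z)=F(X)+\langle Y,X-X_0\rangle+\frac1{2\eta}\|X-X_0\|_F^2+\langle Z,\sqrt{I-W}X_0\rangle+\frac1{2\eta}\|\sqrt{I-W}X_0\|_F^2$.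 ADAPD: fix $\eta>0$ and non-increasing nonnegative $(\epsilon_k)_{k\ge1}$; arbitrary $X^0,X_0^0,Y^0$, $Z^0\in\mathrm{range}(\sqrt{I-W})$. For $k\ge0$: $X^{k+1}$ is any matrix such that each row $r_i^{k+1}$ of $R^{k+1}=\nabla F(X^{k+1})+Y^k+\frac1\eta(X^{k+1}-X_0^k)$ satisfies $\|r_i^{k+1}\|_2^2\le\epsilon_{k+1}/N$; $X_0^{k+1}=\frac12(WX_0^k+X^{k+1}+\eta(Y^k-\sqrt{I-W}Z^k))$, $Y^{k+1}=Y^k+\frac1\eta(X^{k+1}-X_0^{k+1})$, $Z^{k+1}=Z^k+\frac1\eta\sqrt{I-W}X_0^{k+1}$. *)

From HB Require Import structures.
From mathcomp Require Import all_boot all_order all_algebra.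
From mathcomp Require Import all_classical all_reals all_analysis.
Set Implicit Arguments. Unset Strict Implicit. Unset Printing Implicit Defensive.
Import Order.TTheory GRing.Theory Num.Theory.
Import numFieldNormedType.Exports.
Local Open Scope ring_scope.

Definition frob_inner (R : realType) (m n : nat) (A B : 'M[R]_(m, n)) : R :=
  \sum_(i < m) \sum_(j < n) A i j * B i j.

Definition frob2 (R : realType) (m n : nat) (A : 'M[R]_(m, n)) : R :=
  frob_inner A A.

Definition frob (R : realType) (m n : nat) (A : 'M[R]_(m, n)) : R :=
  Num.sqrt (frob2 A).

Definition grad (R : realType) (p : nat) (g : 'rV[R]_p -> R) (x : 'rV[R]_p)
  : 'rV[R]_p := \row_(j < p) ('d g x (delta_mx 0 j : 'rV[R]_p)).

Definition Fsum (R : realType) (N p : nat) (f : 'I_N -> 'rV[R]_p -> R)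
  (X : 'M[R]_(N, p)) : R :=
  N%:R^-1 * \sum_(i < N) f i (row i X).

Definition gradF (R : realType) (N p : nat) (f : 'I_N -> 'rV[R]_p -> R)
  (X : 'M[R]_(N, p)) : 'M[R]_(N, p) :=
  \matrix_(i < N, j < p) (N%:R^-1 * grad (f i) (row i X) 0 j).

Definition is_psd_sqrt (R : realType) (N : nat) (S A : 'M[R]_N) : Prop :=
  S^T = S /\ (forall v : 'cV[R]_N, 0 <= (v^T *m S *m v) 0 0) /\ S *m S = A.

Definition mixing_matrix (R : realType) (N : nat) (e : rel 'I_N)
  (W : 'M[R]_N) : Prop :=
  (forall i j, e i j -> 0 < W i j) /\ (forall i j, ~~ e i j -> W i j = 0) /\
  W^T = W /\
  (forall v : 'cV[R]_N,
      (1%:M - W) *m v = 0 <-> exists c : R, v = c *: const_mx 1) /\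
  (* -1 < lambda_N <= ... <= lambda_2 < lambda_1 = 1 *)
  eigenvalue W 1 /\ \rank (eigenspace W 1) = 1%N /\
  (forall a : R, eigenvalue W a -> -1 < a <= 1).

(* Augmented Lagrangian; S plays the role of sqrt(I - W) *)
Definition AL (R : realType) (N p : nat) (f : 'I_N -> 'rV[R]_p -> R)
  (S : 'M[R]_N) (eta : R) (X X0 Y Z : 'M[R]_(N, p)) : R :=
  Fsum f X + frob_inner Y (X - X0) + (2 * eta)^-1 * frob2 (X - X0)
  + frob_inner Z (S *m X0) + (2 * eta)^-1 * frob2 (S *m X0).

(** The change of the augmented Lagrangian in its first argument splits into
    [F(X^{k+1}) - F(X^k)], a linear term in [Y^k] and a difference of two
    squared distances to [X_0^k].  Bounding the first by the descent lemma for
    the [L]-smooth [F] taken at [X^{k+1}], and expanding the squares around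
    [X^{k+1}], all linear terms collect into [<R^{k+1}, X^{k+1} - X^k>], where
    [R^{k+1}] is the inexactness residual of the [X]-update.  Young's inequality
    with weight [L] and the row-wise bound [||R^{k+1}||_F^2 <= eps_{k+1}] finish
    the estimate. *)
From HB Require Import structures.
From mathcomp Require Import all_boot all_order all_algebra.
From mathcomp Require Import all_classical all_reals all_analysis.
From mathcomp Require Import ring lra.
Set Implicit Arguments. Unset Strict Implicit. Unset Printing Implicit Defensive.
Import Order.TTheory GRing.Theory Num.Theory.
Import numFieldNormedType.Exports.
Local Open Scope ring_scope.

Section FrobeniusInner.
Variables (R : realType) (m n : nat).
Implicit Types (A B C : 'M[R]_(m, n)) (a c e K : R).

Lemma frob_innerC A B : frob_inner A B = frob_inner B A.
Proof. by apply: eq_bigr => i _; apply: eq_bigr => j _; rewrite mulrC. Qed.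

Lemma frob_innerDl A B C : frob_inner (A + B) C = frob_inner A C + frob_inner B C.
Proof.
rewrite /frob_inner -big_split; apply: eq_bigr => i _.
by rewrite -big_split; apply: eq_bigr => j _; rewrite !mxE mulrDl.
Qed.

Lemma frob_innerZl a A B : frob_inner (a *: A) B = a * frob_inner A B.
Proof.
rewrite /frob_inner mulr_sumr; apply: eq_bigr => i _.
by rewrite mulr_sumr; apply: eq_bigr => j _; rewrite !mxE mulrA.
Qed.

Lemma frob_innerNl A B : frob_inner (- A) B = - frob_inner A B.
Proof. by rewrite -scaleN1r frob_innerZl mulN1r. Qed.

Lemma frob_innerBl A B C : frob_inner (A - B) C = frob_inner A C - frob_inner B C.
Proof. by rewrite frob_innerDl frob_innerNl. Qed.

Lemma frob_innerDr A B C : frob_inner C (A + B) = frob_inner C A + frob_inner C B.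
Proof. by rewrite frob_innerC frob_innerDl !(frob_innerC C). Qed.

Lemma frob_innerZr a A B : frob_inner B (a *: A) = a * frob_inner B A.
Proof. by rewrite frob_innerC frob_innerZl frob_innerC. Qed.

Lemma frob_innerNr A B : frob_inner B (- A) = - frob_inner B A.
Proof. by rewrite frob_innerC frob_innerNl frob_innerC. Qed.

Lemma frob_innerBr A B C : frob_inner C (A - B) = frob_inner C A - frob_inner C B.
Proof. by rewrite frob_innerDr frob_innerNr. Qed.

Lemma frob2_ge0 A : 0 <= frob2 A.
Proof.
by apply: sumr_ge0 => i _; apply: sumr_ge0 => j _; rewrite -expr2 sqr_ge0.
Qed.

Lemma frob_ge0 A : 0 <= frob A.
Proof. exact: sqrtr_ge0. Qed.

Lemma sqr_frob A : frob A ^+ 2 = frob2 A.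
Proof. by rewrite sqr_sqrtr // frob2_ge0. Qed.

Lemma frob2N A : frob2 (- A) = frob2 A.
Proof. by rewrite /frob2 frob_innerNl frob_innerNr opprK. Qed.

Lemma frob2Z a A : frob2 (a *: A) = a ^+ 2 * frob2 A.
Proof. by rewrite /frob2 frob_innerZl frob_innerZr mulrA expr2. Qed.

Lemma frobZ a A : 0 <= a -> frob (a *: A) = a * frob A.
Proof. by move=> a0; rewrite /frob frob2Z sqrtrM ?sqr_ge0 // sqrtr_sqr ger0_norm. Qed.

Lemma frob2_sub A B :
  frob2 A - frob2 B = 2 * frob_inner A (A - B) - frob2 (A - B).
Proof.
rewrite /frob2 !frob_innerBl !frob_innerBr (frob_innerC B A); ring.
Qed.

Lemma young_scalar (a b c : R) : 0 < c -> a * b <= a ^+ 2 / (2 * c) + c / 2 * b ^+ 2.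
Proof.
move=> c0; rewrite -subr_ge0.
have -> : a ^+ 2 / (2 * c) + c / 2 * b ^+ 2 - a * b = (a - c * b) ^+ 2 / (2 * c).
  by field; rewrite gt_eqF.
by rewrite divr_ge0 ?sqr_ge0 // mulr_ge0 // ltW.
Qed.

Lemma young_frob_inner A B c : 0 < c ->
  frob_inner A B <= frob2 A / (2 * c) + c / 2 * frob2 B.
Proof.
move=> c0; rewrite /frob2 /frob_inner mulr_suml mulr_sumr -big_split /=.
apply: ler_sum => i _; rewrite mulr_suml mulr_sumr -big_split /=.
by apply: ler_sum => j _; rewrite -!expr2; apply: young_scalar.
Qed.

Lemma frob_inner_ge_bounded A B K : 0 < K -> frob A <= K * frob B ->
  - (K * frob2 B) <= frob_inner A B.
Proof.
move=> K0 hA; rewrite lerNl -frob_innerNl.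
apply: (le_trans (young_frob_inner (- A) B K0)); rewrite frob2N.
have hA2 : frob2 A <= K ^+ 2 * frob2 B.
  by rewrite -!sqr_frob -exprMn ler_sqr // nnegrE ?mulr_ge0 ?frob_ge0 ?ltW.
have -> : K * frob2 B = K ^+ 2 * frob2 B / (2 * K) + K / 2 * frob2 B.
  by field; rewrite gt_eqF.
by rewrite lerD2r ler_wpM2r // invr_ge0 mulr_ge0 // ltW.
Qed.

Lemma frob2_row_sum A : frob2 A = \sum_(i < m) frob2 (row i A).
Proof.
rewrite /frob2 /frob_inner; apply: eq_bigr => i _; rewrite big_ord1.
by apply: eq_bigr => j _; rewrite !mxE.
Qed.

Lemma frob2_le_rows A e : 0 <= e ->
  (forall i, frob2 (row i A) <= e / m%:R) -> frob2 A <= e.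
Proof.
move=> e0 hrow; rewrite frob2_row_sum.
case: m A hrow => [|m'] A hrow; first by rewrite big_ord0.
apply: (le_trans (ler_sum _ (fun i _ => hrow i))).
by rewrite sumr_const card_ord -(mulr_natr (e / _)) divfK // pnatr_eq0.
Qed.

End FrobeniusInner.

Lemma descent_line (R : realType) (phi dphi : R -> R) (M : R) :
  (forall t : R, is_derive t 1 phi (dphi t)) ->
  (forall t : R, 0 < t < 1 -> dphi 0 - M * t <= dphi t) ->
  phi 0 + dphi 0 - M / 2 <= phi 1.
Proof.
move=> dphiP dphi_ge.
(* Mean value theorem for [h], whose derivative is nonnegative on ]0, 1[. *)
pose h : R -> R := phi + (- dphi 0) \*: id + (M / 2) \*: (id * id).
pose dh (t : R) := dphi t - dphi 0 + M * t.
have dhP (t : R) : is_derive t 1 h (dh t).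
  have did : is_derive t 1 (@id R) 1 := is_derive_id t 1.
  have scaleE (x y : R) : x *: y = x * y by [].
  apply: (is_derive_eq (is_deriveD (is_deriveD (dphiP t)
    (is_deriveZ (- dphi 0) did)) (is_deriveZ (M / 2) (is_deriveM did did)))).
  by rewrite /dh !scaleE !mulr1 mulrDr -mulrDl -splitr.
have [c c01 hc] : exists2 c, c \in `]0, 1[ & h 1 - h 0 = dh c * (1 - 0).
  apply: MVT => //; apply: derivable_within_continuous => x _.
  exact: ex_derive.
have dhc_ge0 : 0 <= dh c.
  by move: c01; rewrite in_itv /= => /dphi_ge; rewrite /dh; lra.
have hE (s : R) : h s = phi s + (- dphi 0) * s + M / 2 * (s * s) by [].
move: hc; rewrite subr0 mulr1 !hE !(mulr0, mulr1, addr0) => hc.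
lra.
Qed.

Lemma is_derive_line (R : realType) (V W : normedModType R) (g : V -> W)
    (a v : V) (t : R) :
  differentiable g (a + t *: v) ->
  is_derive t 1 (fun s : R => g (a + s *: v)) ('d g (a + t *: v) v).
Proof.
move=> dg; pose l (s : R) := a + s *: v.
have dl : is_diff t l ( *:%R^~ v).
  have := is_diffD (is_diff_cst a t) (is_diff_scalel t v).
  by rewrite add0r.
have dgl : differentiable (g \o l) t by apply: differentiable_comp.
apply: DeriveDef; first exact: diff_derivable.
by rewrite deriveE // diff_comp //= diff_val /= scale1r.
Qed.

Lemma diff_grad (R : realType) p (g : 'rV[R]_p -> R) x v :
  'd g x v = \sum_(j < p) grad g x 0 j * v 0 j.
Proof.
rewrite {1}(matrix_sum_delta v) big_ord1 linear_sum; apply: eq_bigr => j _.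
by rewrite linearZ /grad mxE /= mulrC.
Qed.

Lemma is_derive_Fsum_line (R : realType) N p (f : 'I_N -> 'rV[R]_p -> R)
    (X D : 'M[R]_(N, p)) (t : R) :
  (forall i x, differentiable (f i) x) ->
  is_derive t 1 (fun s : R => Fsum f (X + s *: D))
    (frob_inner (gradF f (X + t *: D)) D).
Proof.
move=> df.
have rowE (s : R) i : row i (X + s *: D) = row i X + s *: row i D.
  by apply/rowP => j; rewrite !mxE.
have -> : (fun s : R => Fsum f (X + s *: D)) =
    N%:R^-1 \*: \sum_(i < N) (fun s : R => f i (row i X + s *: row i D)).
  apply/funext => s; rewrite /Fsum fct_sumE /=.
  by congr (_ * _); apply: eq_bigr => i _; rewrite rowE.
apply: is_derive_eq.
  apply/is_deriveZ/is_derive_sum => i.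
  by apply: is_derive_line; apply: df.
rewrite /frob_inner scaler_sumr; apply: eq_bigr => i _.
rewrite diff_grad scaler_sumr; apply: eq_bigr => j _.
by rewrite !mxE rowE -mulrA.
Qed.

Lemma Fsum_ge_linearization (R : realType) N p (f : 'I_N -> 'rV[R]_p -> R)
    (L : R) (X D : 'M[R]_(N, p)) :
  (forall i x, differentiable (f i) x) -> 0 < L ->
  (forall U V, frob (gradF f U - gradF f V) <= L * frob (U - V)) ->
  Fsum f X + frob_inner (gradF f X) D - L / 2 * frob2 D <= Fsum f (X + D).
Proof.
move=> df L0 lip.
have := descent_line (M := L * frob2 D) (is_derive_Fsum_line X D ^~ df).
rewrite !scale0r scale1r addr0 mulrAC; apply => t /andP [t0 _].
rewrite -lerBrDl -frob_innerBl [L * _ * t]mulrAC.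
apply: frob_inner_ge_bounded; first exact: mulr_gt0.
apply: (le_trans (lip _ _)).
by rewrite -mulrA ler_pM2l // [X + _]addrC addrK frobZ // ltW.
Qed.

Theorem lemma7 (R : realType) (N p : nat) (e : rel 'I_N)
  (W S : 'M[R]_N) (f : 'I_N -> 'rV[R]_p -> R) (L eta : R)
  (eps : nat -> R) (X X0 Y Z : nat -> 'M[R]_(N, p)) :
  (* graph and mixing matrix *)
  symmetric e -> mixing_matrix e W ->
  is_psd_sqrt S (1%:M - W) ->
  (* smoothness *)
  (forall i x, differentiable (f i) x) ->
  0 < L ->
  (forall U V : 'M[R]_(N, p), frob (gradF f U - gradF f V) <= L * frob (U - V)) ->
  (* step size *)
  0 < eta -> eta < (2 * L)^-1 ->
  (* tolerances (eps_k)_{k>=1}: nonnegative, non-increasing *)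
  (forall k, (1 <= k)%N -> 0 <= eps k) ->
  (forall k, (1 <= k)%N -> eps k.+1 <= eps k) ->
  (* ADAPD *)
  (exists M : 'M[R]_(N, p), Z 0%N = S *m M) ->
  (forall k (i : 'I_N),
      let Rk := gradF f (X k.+1) + Y k + eta^-1 *: (X k.+1 - X0 k) in
      frob2 (row i Rk) <= eps k.+1 / N%:R) ->
  (forall k, X0 k.+1 = 2^-1 *: (W *m X0 k + X k.+1 + eta *: (Y k - S *m Z k))) ->
  (forall k, Y k.+1 = Y k + eta^-1 *: (X k.+1 - X0 k.+1)) ->
  (forall k, Z k.+1 = Z k + eta^-1 *: (S *m X0 k.+1)) ->
  forall k : nat,
    AL f S eta (X k.+1) (X0 k) (Y k) (Z k) - AL f S eta (X k) (X0 k) (Y k) (Z k)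
    <= (2 * L * eta - 1) / (2 * eta) * frob2 (X k.+1 - X k) + eps k.+1 / (2 * L).
Proof.
(* The bound on [eta] only makes the coefficient negative. *)
move=> _ _ _ df L0 lip eta0 _ eps_ge0 _ _ residual _ _ _ k.
set d := X k.+1 - X k; set U := X0 k.
set G := gradF f (X k.+1) + Y k + eta^-1 *: (X k.+1 - U).
have young := young_frob_inner G d L0.
have descent := Fsum_ge_linearization (X k.+1) (- d) df L0 lip.
rewrite frob_innerNr frob2N (_ : X k.+1 + - d = X k) in descent; last first.
  by rewrite opprB addrCA subrr addr0.
have G_d : frob_inner G d = frob_inner (gradF f (X k.+1)) d + frob_inner (Y k) d
    + eta^-1 * frob_inner (X k.+1 - U) d.
  by rewrite /G 2!frob_innerDl frob_innerZl.
have Y_d : frob_inner (Y k) (X k.+1 - U) - frob_inner (Y k) (X k - U) = frob_inner (Y k) d.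
  by rewrite -frob_innerBr opprB addrA subrK.
have sq : (2 * eta)^-1 * frob2 (X k.+1 - U) - (2 * eta)^-1 * frob2 (X k - U)
    = eta^-1 * frob_inner (X k.+1 - U) d - (2 * eta)^-1 * frob2 d.
  rewrite -mulrBr frob2_sub (_ : X k.+1 - U - (X k - U) = d); last first.
    by rewrite opprB addrA subrK.
  by field; rewrite gt_eqF.
have coef : (2 * L * eta - 1) / (2 * eta) * frob2 d
    = L / 2 * frob2 d + L / 2 * frob2 d - (2 * eta)^-1 * frob2 d.
  by field; rewrite gt_eqF.
have G_eps : frob2 G / (2 * L) <= eps k.+1 / (2 * L).
  apply: ler_wpM2r; first by rewrite invr_ge0 mulr_ge0 // ltW.
  by apply: frob2_le_rows => [|i]; [exact: eps_ge0 | exact: residual].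
rewrite /AL; lra.
Qed.
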